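(* Under the setting below, for every $\tau\in[0,\bar\tau)$ one has $$B(\tau)=A(\tau)+(2e^{-\delta\tau}-1)S^*(\tau)\beta'(S^*(\tau)),$$ hence $B(\tau)<A(\tau)$; in particular $\lambda=0$ is never a root of $\lambda+A(\tau)-B(\tau)e^{-\lambda\tau}=0$. Moreover, if this equation has a purely imaginary root $i\omega$ for some $\tau\in[0,\bar\tau)$, then $A(\tau)<|B(\tau)|$ (so $B(\tau)<0$), which is equivalent to $$\frac{4\delta e^{-\delta\tau}}{2e^{-\delta\tau}-1}+(2e^{-\delta\tau}-1)\,\chi\!\left(\beta^{-1}\!\Big(\frac{\delta}{2e^{-\delta\tau}-1}\Big)\right)<0,\qquad \chi(y):=y\beta'(y).$$
   Context: Let $\delta>0$ and $\beta:[0,+\infty)\to(0,+\infty)$ continuously differentiable, strictly decreasing, with $\beta'(s)<0$ for $s>0$, $\lim_{S\to+\infty}\beta(S)=0$, and assume $\delta<\beta(0)$. Let $\bar\tau:=\frac1\delta\ln\!\big(\frac{2\beta(0)}{\delta+\beta(0)}\big)$, $\beta^{-1}:(0,\beta(0)]\to[0,\infty)$ the inverse of $\beta$. For $\tau\in[0,\bar\tau)$ set $S^*(\tau)=\beta^{-1}\!\big(\frac{\delta}{2e^{-\delta\tau}-1}\big)$, $N^*(\tau)=(2e^{-\delta\tau}-1)e^{\delta\tau}S^*(\tau)$, $A(\tau)=\delta+\beta(S^*(\tau))$ and $B(\tau)=[2\beta(S^*(\tau))+N^*(\tau)\beta'(S^*(\tau))]e^{-\delta\tau}$. *)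

From Stdlib Require Import Reals Lra.
Open Scope R_scope.

Definition beta_hyp (delta : R) (beta beta' : R -> R) : Prop :=
  (forall s, 0 <= s -> 0 < beta s) /\
  (forall s, 0 < s -> derivable_pt_lim beta s (beta' s)) /\
  (forall eps, 0 < eps -> exists d, 0 < d /\
     forall h, 0 < h < d -> Rabs ((beta h - beta 0) / h - beta' 0) < eps) /\
  (forall s, 0 <= s -> forall eps, 0 < eps -> exists d, 0 < d /\
     forall t, 0 <= t -> Rabs (t - s) < d -> Rabs (beta' t - beta' s) < eps) /\
  (forall s t, 0 <= s -> s < t -> beta t < beta s) /\
  (forall s, 0 < s -> beta' s < 0) /\
  (forall eps, 0 < eps -> exists M, forall S, M <= S -> Rabs (beta S) < eps) /\
  0 < delta /\ delta < beta 0.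

Definition is_beta_inv (beta binv : R -> R) : Prop :=
  forall y, 0 < y <= beta 0 -> 0 <= binv y /\ beta (binv y) = y.

Definition taubar (delta : R) (beta : R -> R) : R :=
  / delta * ln (2 * beta 0 / (delta + beta 0)).

Definition Sstar (delta : R) (binv : R -> R) (tau : R) : R :=
  binv (delta / (2 * exp (- delta * tau) - 1)).

Definition Nstar (delta : R) (binv : R -> R) (tau : R) : R :=
  (2 * exp (- delta * tau) - 1) * exp (delta * tau) * Sstar delta binv tau.

Definition Acoef (delta : R) (beta binv : R -> R) (tau : R) : R :=
  delta + beta (Sstar delta binv tau).

Definition Bcoef (delta : R) (beta beta' binv : R -> R) (tau : R) : R :=
  (2 * beta (Sstar delta binv tau)
     + Nstar delta binv tau * beta' (Sstar delta binv tau)) * exp (- delta * tau).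

Definition chi (beta' : R -> R) (y : R) : R := y * beta' y.

From Stdlib Require Import Reals Lra.
Open Scope R_scope.

(* Write E = exp(-delta tau), c = 2E - 1 and S = S*(tau).  The delay bound
   tau < taubar is exactly the inequality c > delta / beta(0); hence
   y = delta / c lies in (0, beta(0)), so S = beta^{-1}(y) is positive and
   satisfies the equilibrium relation beta(S) c = delta.  Using
   N*(tau) = c S / E, this relation turns B into A + c S beta'(S); the last
   term is negative because beta' < 0 on (0,oo), whence B < A and lambda = 0
   is not a root.  For a purely imaginary root i omega, the real and imaginary
   parts A = B cos(omega tau), omega = - B sin(omega tau) force A < |B|: if
   |B| <= A then necessarily B < 0, cos(omega tau) = -1, sin(omega tau) = 0,
   so omega = 0 and cos 0 = -1, absurd.  Finally, since 0 < A and B < A,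
   A < |B| means A + B < 0, which the identity 4 delta E / c = 2 delta + 2 beta(S)
   rewrites as the stated condition on chi. *)

Lemma delay_bound_coef (delta b0 tau : R) :
  0 < delta -> 0 < b0 ->
  tau < / delta * ln (2 * b0 / (delta + b0)) ->
  delta / b0 < 2 * exp (- delta * tau) - 1.
Proof.
  intros Hd Hb0 Htau.
  set (X := 2 * b0 / (delta + b0)) in Htau.
  assert (HX : 0 < X) by (unfold X; apply Rdiv_lt_0_compat; lra).
  assert (Hlog : - ln X < - delta * tau).
  { apply (Rmult_lt_compat_l delta) in Htau; [|lra].
    rewrite <- Rmult_assoc, Rinv_r in Htau; lra. }
  assert (HE : / X < exp (- delta * tau)).
  { rewrite <- (exp_ln X HX), <- exp_Ropp. now apply exp_increasing. }
  replace (delta / b0) with (2 * / X - 1) by (unfold X; field; lra).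
  lra.
Qed.

Lemma equilibrium_level_range (delta b0 c : R) :
  0 < delta -> 0 < b0 -> delta / b0 < c -> 0 < delta / c < b0.
Proof.
  intros Hd Hb0 Hc.
  assert (Hcpos : 0 < c) by (pose proof (Rdiv_lt_0_compat _ _ Hd Hb0); lra).
  split; [now apply Rdiv_lt_0_compat|].
  apply (Rmult_lt_compat_r b0) in Hc; [|lra].
  replace (delta / b0 * b0) with delta in Hc by (field; lra).
  apply (Rmult_lt_reg_r c); [lra|].
  replace (delta / c * c) with delta by (field; lra); lra.
Qed.

Lemma beta_inv_interior (beta binv : R -> R) (y : R) :
  is_beta_inv beta binv -> 0 < y < beta 0 ->
  0 < binv y /\ beta (binv y) = y.
Proof.
  intros Hinv Hy.
  destruct (Hinv y ltac:(lra)) as [[Hpos | Hzero] Hval].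
  - split; assumption.
  - rewrite <- Hzero in Hval; lra.
Qed.

(* The equilibrium relation beta(S) c = delta eliminates beta(S) e^{-delta tau}
   from B, leaving A plus the derivative term c S beta'(S). *)
Lemma Bcoef_decomposition (delta : R) (beta beta' binv : R -> R) (tau : R) :
  let c := 2 * exp (- delta * tau) - 1 in
  let S := Sstar delta binv tau in
  beta S * c = delta ->
  Bcoef delta beta beta' binv tau = Acoef delta beta binv tau + c * S * beta' S.
Proof.
  intros c S Heq.
  unfold Bcoef, Acoef, Nstar; fold S.
  assert (Hinv : exp (- delta * tau) * exp (delta * tau) = 1).
  { rewrite <- exp_plus, <- exp_0; f_equal; ring. }
  unfold c in Heq |- *.
  set (E := exp (- delta * tau)) in *.
  replace ((2 * beta S + (2 * E - 1) * exp (delta * tau) * S * beta' S) * E)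
    with (2 * beta S * E + (2 * E - 1) * S * beta' S * (E * exp (delta * tau)))
    by ring.
  rewrite Hinv; lra.
Qed.

Lemma imaginary_root_dominance (A B omega tau : R) :
  0 < A -> B < A ->
  A - B * cos (omega * tau) = 0 ->
  omega + B * sin (omega * tau) = 0 ->
  A < Rabs B.
Proof.
  intros HA HBA Hre Him.
  destruct (Rle_or_lt (Rabs B) A) as [Hle | Hlt]; [exfalso | exact Hlt].
  pose proof (COS_bound (omega * tau)) as Hcos.
  unfold Rabs in Hle; destruct (Rcase_abs B) as [Hneg | Hnonneg].
  - assert (Hcos1 : cos (omega * tau) = -1) by nra.
    assert (Hsin0 : sin (omega * tau) = 0).
    { pose proof (sin2_cos2 (omega * tau)) as Hpyth; unfold Rsqr in Hpyth; nra. }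
    assert (Homega : omega = 0) by (rewrite Hsin0 in Him; lra).
    rewrite Homega, Rmult_0_l, cos_0 in Hcos1; lra.
  - nra.
Qed.

Lemma dominance_iff_sum_neg (A B : R) :
  0 < A -> B < A -> (A < Rabs B <-> A + B < 0).
Proof.
  intros HA HBA; unfold Rabs; destruct (Rcase_abs B); split; intro; lra.
Qed.

Lemma delay_term_identity (d b E : R) :
  0 < 2 * E - 1 -> b * (2 * E - 1) = d ->
  4 * d * E / (2 * E - 1) = 2 * d + 2 * b.
Proof.
  intros Hc Heq; subst d; field; lra.
Qed.

Theorem mainTheorem8 (delta : R) (beta beta' binv : R -> R)
  (Hb : beta_hyp delta beta beta') (Hinv : is_beta_inv beta binv) :
  forall tau, 0 <= tau < taubar delta beta ->
    let A := Acoef delta beta binv tau in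
    let B := Bcoef delta beta beta' binv tau in
    let c := 2 * exp (- delta * tau) - 1 in
    let S := Sstar delta binv tau in
    B = A + c * S * beta' S /\
    B < A /\
    (0 + A - B * exp (- 0 * tau) <> 0) /\
    (forall omega : R,
        A - B * cos (omega * tau) = 0 ->
        omega + B * sin (omega * tau) = 0 ->
        A < Rabs B /\ B < 0) /\
    (A < Rabs B <->
       4 * delta * exp (- delta * tau) / c
       + c * chi beta' (binv (delta / c)) < 0).
Proof.
  destruct Hb as [Hpos [_ [_ [_ [_ [Hder [_ [Hd _]]]]]]]].
  intros tau [_ Htau] A B c S.
  assert (Hb0 : 0 < beta 0) by (apply Hpos; lra).
  assert (Hc : delta / beta 0 < c) by now apply delay_bound_coef.
  assert (Hcpos : 0 < c) by (pose proof (Rdiv_lt_0_compat _ _ Hd Hb0); lra).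
  assert (Hy : 0 < delta / c < beta 0) by now apply equilibrium_level_range.
  destruct (beta_inv_interior beta binv _ Hinv Hy) as [HS HbS].
  change (binv (delta / c)) with S in HS, HbS.
  assert (Hequil : beta S * c = delta) by (rewrite HbS; field; lra).
  assert (HBeq : B = A + c * S * beta' S) by now apply Bcoef_decomposition.
  assert (Hterm : c * S * beta' S < 0).
  { rewrite <- (Rmult_0_r (c * S)).
    apply Rmult_lt_compat_l; [now apply Rmult_lt_0_compat | now apply Hder]. }
  assert (HA : 0 < A) by (pose proof (Hpos S ltac:(lra)); unfold A, Acoef; fold S; lra).
  assert (HBA : B < A) by lra.
  split; [exact HBeq|]. split; [exact HBA|]. split.
  { replace (- 0 * tau) with 0 by ring; rewrite exp_0; lra. }
  split.
  { intros omega Hre Him.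
    pose proof (imaginary_root_dominance A B omega tau HA HBA Hre Him) as Hdom.
    split; [exact Hdom|].
    apply (dominance_iff_sum_neg A B HA HBA) in Hdom; lra. }
  rewrite dominance_iff_sum_neg by assumption.
  assert (Hdelay : 4 * delta * exp (- delta * tau) / c = 2 * delta + 2 * beta S)
    by now apply delay_term_identity.
  rewrite Hdelay.
  change (binv (delta / c)) with S; unfold chi; rewrite <- Rmult_assoc.
  unfold A, Acoef in HBeq |- *; fold S in HBeq |- *.
  split; intro; lra.
Qed.
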